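(* There is a formula $\phi$ of $\mathcal{D}(\mathsf{M})$ containing no dependence atoms (and no negated dependence atoms) such that $\phi$ is not $k$-coherent for any $k\in\mathbb N$ (in particular $\phi$ is not flat).
   Context: All structures are finite. Dependence logic with majority, $\mathcal{D}(\mathsf{M})[\tau]$: formulas over a vocabulary $\tau$ in negation normal form, built from first-order literals (atomic formulas and negated atomic formulas), dependence atoms $=\!(t_1,\dots,t_n)$ ($t_i$ terms) and their negations $\neg=\!(t_1,\dots,t_n)$, using $\wedge$, $\vee$, $\exists x$, $\forall x$ and $\mathsf{M}x$. Free variables are as in first-order logic ($\mathsf{M}x$ binds $x$), and the free variables of $=\!(t_1,\dots,t_n)$ are all variables occurring in $t_1,\dots,t_n$. A team $X$ over a structure $\mathfrak A$ with domain $A$ and with finite variable domain $\mathrm{dom}(X)$ is a set of assignments $s:\mathrm{dom}(X)\to A$. For $F:X\to A$ let $X(F/x)=\{s(F(s)/x): s\in X\}$ and $X(A/x)=\{s(a/x): s\in X, a\in A\}$, where $s(a/x)$ agrees with $s$ except that it maps $x$ to $a$. Satisfaction $\mathfrak A\models_X\phi$ (for teams whose domain contains the free variables of $\phi$): for a first-order literal, every $s\in X$ satisfies it in the usual sense; $\mathfrak A\models_X =\!(t_1,\dots,t_n)$ iff any $s,s'\in X$ giving equal values to $t_1,\dots,t_{n-1}$ give equal values to $t_n$ ($=\!()$ is always true); $\mathfrak A\models_X\neg=\!(t_1,\dots,t_n)$ iff $X=\emptyset$; $\mathfrak A\models_X\psi\wedge\chi$ iff both hold; $\mathfrak A\models_X\psi\vee\chi$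 iff $X=Y\cup Z$ with $\mathfrak A\models_Y\psi$ and $\mathfrak A\models_Z\chi$; $\mathfrak A\models_X\exists x\psi$ iff $\mathfrak A\models_{X(F/x)}\psi$ for some $F:X\to A$; $\mathfrak A\models_X\forall x\psi$ iff $\mathfrak A\models_{X(A/x)}\psi$; $\mathfrak A\models_X\mathsf{M}x\psi$ iff for at least $|A|^{|X|}/2$ many functions $F:X\to A$ we have $\mathfrak A\models_{X(F/x)}\psi$. A formula $\phi$ is $k$-coherent iff for all structures $\mathfrak A$ and all teams $X$ (with domain containing the free variables of $\phi$): $\mathfrak A\models_X\phi$ holds if and only if $\mathfrak A\models_{X'}\phi$ holds for every $k$-element subteam $X'\subseteq X$. $1$-coherent formulas are called flat. *)

From HB Require Import structures.
From mathcomp Require Import all_boot.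
Set Implicit Arguments. Unset Strict Implicit. Unset Printing Implicit Defensive.

Record vocab := Vocab {
  fsym : Type; farity : fsym -> nat;
  rsym : Type; rarity : rsym -> nat }.

(* A (finite) structure over tau.  Interpretations take argument lists;
   only lists of the correct arity are ever used for well-formed formulas
   (see [wf_formula]). *)
Record structure (tau : vocab) := Structure {
  dom :> finType;
  fint : fsym tau -> seq dom -> dom;
  rint : rsym tau -> seq dom -> bool }.

Section Syntax.
Variables (tau : vocab) (V : finType).

Inductive term : Type :=
  | TVar (x : V)
  | TApp (f : fsym tau) (ts : seq term).

Inductive literal : Type :=
  | LEq (t1 t2 : term)
  | LNEq (t1 t2 : term)
  | LRel (R : rsym tau) (ts : seq term)
  | LNRel (R : rsym tau) (ts : seq term).

(* formulas in negation normal form *)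
Inductive formula : Type :=
  | FLit (l : literal)
  | FDep (ts : seq term)
  | FNDep (ts : seq term)
  | FAnd (p q : formula)
  | FOr (p q : formula)
  | FEx (x : V) (p : formula)
  | FAll (x : V) (p : formula)
  | FMaj (x : V) (p : formula).

Fixpoint tvars (t : term) : seq V :=
  match t with
  | TVar x => [:: x]
  | TApp _ ts => flatten (map tvars ts)
  end.

Fixpoint twf (t : term) : bool :=
  match t with
  | TVar _ => true
  | TApp f ts => (size ts == farity f) && all id (map twf ts)
  end.

Definition lvars (l : literal) : seq V :=
  match l with
  | LEq t1 t2 | LNEq t1 t2 => tvars t1 ++ tvars t2
  | LRel _ ts | LNRel _ ts => flatten (map tvars ts)
  end.

Definition lwf (l : literal) : bool :=
  match l with
  | LEq t1 t2 | LNEq t1 t2 => twf t1 && twf t2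
  | LRel R ts | LNRel R ts => (size ts == rarity R) && all twf ts
  end.

Fixpoint fv (phi : formula) : seq V :=
  match phi with
  | FLit l => lvars l
  | FDep ts | FNDep ts => flatten (map tvars ts)
  | FAnd p q | FOr p q => fv p ++ fv q
  | FEx x p | FAll x p | FMaj x p => filter (fun y => y != x) (fv p)
  end.

Fixpoint wf_formula (phi : formula) : bool :=
  match phi with
  | FLit l => lwf l
  | FDep ts | FNDep ts => all twf ts
  | FAnd p q | FOr p q => wf_formula p && wf_formula q
  | FEx _ p | FAll _ p | FMaj _ p => wf_formula p
  end.

Fixpoint dep_free (phi : formula) : bool :=
  match phi with
  | FLit _ => true
  | FDep _ | FNDep _ => false
  | FAnd p q | FOr p q => dep_free p && dep_free q
  | FEx _ p | FAll _ p | FMaj _ p => dep_free p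
  end.

End Syntax.

Section Semantics.
Variables (tau : vocab) (V : finType) (M : structure tau).

(* An assignment with finite domain D ⊆ V is a finite function
   V -> option M, with value None exactly outside D. *)
Definition asg := {ffun V -> option M}.

Definition supd (s : asg) (x : V) (a : M) : asg :=
  [ffun v => if v == x then Some a else s v].

Fixpoint osequence (l : seq (option M)) : option (seq M) :=
  match l with
  | [::] => Some [::]
  | o :: l' => match o, osequence l' with
               | Some a, Some r => Some (a :: r)
               | _, _ => None
               end
  end.

Fixpoint teval (s : asg) (t : term tau V) : option M :=
  match t with
  | TVar x => s x
  | TApp f ts => omap (fint f) (osequence (map (teval s) ts))
  end.

Definition lit_holds (s : asg) (l : literal tau V) : Prop :=
  match l with
  | LEq t1 t2 => teval s t1 = teval s t2
  | LNEq t1 t2 => teval s t1 <> teval s t2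
  | LRel R ts => if osequence (map (teval s) ts) is Some vs then rint R vs else false
  | LNRel R ts => if osequence (map (teval s) ts) is Some vs then ~~ rint R vs else false
  end.

(* =(t1,...,tn): agreement on t1..t_{n-1} forces agreement on t_n;
   for n = 0 both lists are empty and the atom is trivially true. *)
Definition dep_holds (X : {set asg}) (ts : seq (term tau V)) : Prop :=
  let n := (size ts).-1 in
  forall s s', s \in X -> s' \in X ->
    map (teval s) (take n ts) = map (teval s') (take n ts) ->
    map (teval s) (drop n ts) = map (teval s') (drop n ts).

Fixpoint sat (phi : formula tau V) (X : {set asg}) {struct phi} : Prop :=
  match phi with
  | FLit l => forall s, s \in X -> lit_holds s l
  | FDep ts => dep_holds X ts
  | FNDep _ => X = set0
  | FAnd p q => sat p X /\ sat q X
  | FOr p q => exists Y Z : {set asg}, X = Y :|: Z /\ sat p Y /\ sat q Z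
  | FEx x p => exists F : {ffun asg -> M},
                 sat p [set supd s x (F s) | s in X]
  | FAll x p => sat p [set supd s x a | s in X, a in [set: M]]
  | FMaj x p =>
      (* S = the set of functions F : X -> M with  M |=_{X(F/x)} p ;
         condition  #S >= |M|^|X| / 2 *)
      exists S : {set {ffun {s : asg | s \in X} -> M}},
        (forall F, F \in S <-> sat p [set supd (val s) x (F s) | s : {s : asg | s \in X}])
        /\ #|M| ^ #|X| <= 2 * #|S|
  end.

Definition team_on (D : {set V}) (X : {set asg}) : Prop :=
  forall s, s \in X -> forall v, (s v != None) = (v \in D).

End Semantics.

Definition coherent (tau : vocab) (V : finType) (k : nat) (phi : formula tau V) : Prop :=
  forall (M : structure tau), 0 < #|M| ->
  forall (D : {set V}) (X : {set asg V M}),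
    team_on D X -> {subset fv phi <= D} ->
    (sat phi X <-> (forall X' : {set asg V M}, X' \subset X -> #|X'| = k -> sat phi X')).

From mathcomp Require Import all_boot.
Set Implicit Arguments. Unset Strict Implicit. Unset Printing Implicit Defensive.

(* Take a vocabulary with one unary relation symbol P and the formula
   phi := M x P(x).  In the structure M_n with domain {0,...,n} and P = {0},
   an extension X(F/x) satisfies P(x) exactly when F is constantly 0, so
   exactly one of the |M|^|X| functions F : X -> M is good, and
       M_n |=_X phi   iff   |M|^|X| <= 2.
   Hence phi is not 1-coherent: in M_1 every singleton subteam of the
   two-element team {x:=0, x:=1} satisfies phi (2^1 <= 2) while the whole
   team does not (2^2 > 2).  And phi is not k-coherent for k <> 1: in M_2 the
   singleton team {x:=0} falsifies phi (3^1 > 2), whereas its subteams of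
   size k are either absent (k >= 2) or the empty team, which satisfies phi
   (3^0 <= 2). *)

Lemma coherent_from_subteams (tau : vocab) (V : finType) (k : nat)
    (phi : formula tau V) (M : structure tau) (D : {set V}) (X : {set asg V M}) :
  coherent k phi -> 0 < #|M| -> team_on D X -> {subset fv phi <= D} ->
  (forall X' : {set asg V M}, X' \subset X -> #|X'| = k -> sat phi X') ->
  sat phi X.
Proof. by move=> coh M_pos XD fvD; apply: (coh M M_pos D X XD fvD).2. Qed.

Definition unary_vocab : vocab :=
  @Vocab Empty_set (fun e => match e with end) unit (fun _ => 1).

Definition pointed (n : nat) : structure unary_vocab :=
  @Structure unary_vocab ('I_n.+1 : finType) (fun f _ => match f with end)
    (fun _ vs => vs == [:: ord0]).

Definition atom_P : formula unary_vocab unit :=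
  FLit (LRel (tt : rsym unary_vocab) [:: TVar unary_vocab tt]).

Definition maj_P : formula unary_vocab unit := FMaj tt atom_P.

Section PointedStructure.
Variable n : nat.

Local Notation asgn := (asg unit (pointed n)).

Lemma sat_atom_P_ext (X : {set asgn})
    (F : {ffun {s : asgn | s \in X} -> pointed n}) :
  sat atom_P [set supd (val s) tt (F s) | s : {s : asgn | s \in X}]
  <-> forall s, F s = ord0.
Proof.
split=> [satP s | F0 _ /imsetP [s _ ->]].
- have /satP : supd (val s) tt (F s) \in
      [set supd (val s) tt (F s) | s : {s : asgn | s \in X}].
    by apply/imsetP; exists s.
  by rewrite /= /supd ffunE eqxx /= => /eqP [].
- by rewrite /= /supd ffunE eqxx /= F0.
Qed.

(* Exactly one choice function is good, so M x P(x) holds iff |M|^|X| <= 2. *)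
Lemma sat_maj_P (X : {set asgn}) : sat maj_P X <-> #|pointed n| ^ #|X| <= 2.
Proof.
pose zero : {ffun {s : asgn | s \in X} -> pointed n} := [ffun=> ord0].
have good_zero (F : {ffun {s : asgn | s \in X} -> pointed n}) :
    sat atom_P [set supd (val s) tt (F s) | s : {s : asgn | s \in X}]
    <-> F \in [set zero].
  rewrite inE; split=> [/sat_atom_P_ext F0 | /eqP ->].
  - by apply/eqP/ffunP => s; rewrite ffunE F0.
  - by apply/sat_atom_P_ext => s; rewrite ffunE.
split=> [[S [good_S card_S]] | card_X].
- have S_sub : S \subset [set zero] by apply/subsetP => F /good_S /good_zero.
  apply: (leq_trans card_S); rewrite -[2 in X in _ <= X]muln1 leq_mul2l.
  by rewrite -(cards1 zero) subset_leq_card ?orbT.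
- exists [set zero]; split; last by rewrite cards1.
  by move=> F; split=> /good_zero.
Qed.

Definition const_asg (a : pointed n) : asgn := [ffun=> Some a].

Lemma const_asg_inj : injective const_asg.
Proof. by move=> a b /ffunP /(_ tt); rewrite !ffunE => -[]. Qed.

Lemma const_team_on (A : {set pointed n}) :
  team_on [set: unit] [set const_asg a | a in A].
Proof. by move=> _ /imsetP [a _ ->] v; rewrite ffunE in_setT. Qed.

Lemma card_const_team (A : {set pointed n}) :
  #|[set const_asg a | a in A]| = #|A|.
Proof. exact/card_imset/const_asg_inj. Qed.

Lemma maj_P_from_subteams (k : nat) (A : {set pointed n}) :
  coherent k maj_P ->
  (forall X' : {set asgn}, X' \subset [set const_asg a | a in A] ->
     #|X'| = k -> #|pointed n| ^ k <= 2) ->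
  #|pointed n| ^ #|A| <= 2.
Proof.
move=> coh small_subteams; rewrite -card_const_team; apply/sat_maj_P.
apply: (coherent_from_subteams coh _ (@const_team_on A))
  => [|x _|X' sub card_X'].
- by rewrite card_ord.
- exact: in_setT.
- by apply/sat_maj_P; rewrite card_X'; apply: small_subteams sub card_X'.
Qed.

End PointedStructure.

Lemma maj_P_not_1_coherent : ~ coherent 1 maj_P.
Proof.
move=> coh; suff : #|pointed 1| ^ #|[set: pointed 1]| <= 2 by rewrite cardsT card_ord.
by apply: (maj_P_from_subteams coh) => X' _ _; rewrite card_ord.
Qed.

Lemma maj_P_not_coherent_neq1 (k : nat) : k != 1 -> ~ coherent k maj_P.
Proof.
move=> k_neq1 coh; suff : #|pointed 2| ^ #|[set ord0 : pointed 2]| <= 2.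
  by rewrite cards1 card_ord.
apply: (maj_P_from_subteams coh) => X' sub card_X'.
have : k <= 1.
  by rewrite -card_X' (leq_trans (subset_leq_card sub)) // card_const_team cards1.
by case: k k_neq1 {coh card_X'} => [|[|]].
Qed.

Theorem mainTheorem3 :
  exists (tau : vocab) (V : finType) (phi : formula tau V),
    wf_formula phi /\ dep_free phi /\ forall k : nat, ~ coherent k phi.
Proof.
exists unary_vocab, (unit : finType), maj_P; do 2!split=> //.
move=> k; case: (eqVneq k 1) => [-> | k_neq1].
- exact: maj_P_not_1_coherent.
- exact: maj_P_not_coherent_neq1.
Qed.
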